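(* Let $n \geq 0$ be an integer, let $X$ and $A_1, \ldots, A_n$ be finite sets with $X$ nonempty (and each $A_i$ nonempty), and for each $1 \leq i \leq n$ let $f_i : X \to A_i$ be a function. Then $$\# \{ (x_0, \ldots, x_n) \in X^{n+1} : f_i(x_{i-1}) = f_i(x_i) \text{ for all } 1 \leq i \leq n \} \geq \frac{(\# X)^{n+1}}{\prod_{i=1}^n \# A_i}.$$
   Context: $\# S$ denotes the cardinality of a finite set $S$; an empty product equals $1$. *)

From mathcomp Require Import all_boot all_order all_algebra.
Set Implicit Arguments. Unset Strict Implicit. Unset Printing Implicit Defensive.

(* Tuples (x_0,...,x_n) in X^{n+1} with f_i(x_{i-1}) = f_i(x_i) for 1<=i<=n.
   Indices are shifted: i : 'I_n stands for i+1; x_{i} is x (widen_ord _ i),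
   x_{i+1} is x (lift ord0 i). *)
Definition chain_tuples (X : finType) (n : nat) (A : 'I_n -> finType)
  (f : forall i : 'I_n, X -> A i) : {set {ffun 'I_n.+1 -> X}} :=
  [set x : {ffun 'I_n.+1 -> X} |
     [forall i : 'I_n, f i (x (widen_ord (leqnSn n) i)) == f i (x (lift ord0 i))]].

From mathcomp Require Import all_boot all_order all_algebra.
Import Order.TTheory GRing.Theory Num.Theory.

Set Implicit Arguments. Unset Strict Implicit. Unset Printing Implicit Defensive.

(* Let c(y) count the chains starting at x_0 = y.  Peeling off the first
   coordinate, c(y) is the sum of the counts of the shorter chains over the
   f_0-fiber of y, and the geometric mean of these counts grows by a factor at
   least #X / #A_0: on a fiber of size m with sum S, AM-GM gives
   S^m >= m^m * prod c, and AM-GM applied to the 1/m(y), whose sum is the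
   number of nonempty fibers, gives prod_y m(y) >= (#X / #A_0)^#X.  Finally the
   total number of chains is at least #X times the geometric mean of c. *)

Local Open Scope ring_scope.

Lemma AGM_scaled_le (F : numDomainType) (T : finType) (E : T -> F) :
  (forall i, 0 <= E i) -> #|T|%:R ^+ #|T| * \prod_i E i <= (\sum_i E i) ^+ #|T|.
Proof.
move=> E_ge0; rewrite -prodr_const -big_split /=.
rewrite (eq_bigr (fun i => E i *+ #|T|)) => [|i _]; last by rewrite mulr_natl.
by apply: (leif_AGM_scaled _).1 => i _; rewrite mulrn_wge0.
Qed.

Section Fibers.

Variables (F : numFieldType) (X B : finType) (h : X -> B).

Local Notation fiber y := (h @^-1: [set h y]).

Lemma fiber_card_gt0 y : (0 < #|fiber y|)%N.
Proof. by apply/card_gt0P; exists y; rewrite !inE. Qed.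

Lemma sum_inv_fiber_card_le :
  \sum_y (#|fiber y|%:R : F)^-1 <= #|B|%:R.
Proof.
rewrite (partition_big h predT) //= -sumr_const; apply: ler_sum => b _.
have [y hy | no_fiber] := pickP (fun y => h y == b); last first.
  by rewrite big_pred0.
rewrite (eq_bigr (fun=> (#|fiber y|%:R : F)^-1)); last first.
  by move=> z /eqP hz; rewrite hz (eqP hy).
rewrite sumr_const (@eq_card _ _ (fiber y)); last first.
  by move=> z; rewrite !inE (eqP hy).
by rewrite -[X in X <= _]mulr_natr mulVf // pnatr_eq0 -lt0n fiber_card_gt0.
Qed.

Lemma prod_fiber_card_ge :
  #|X|%:R ^+ #|X| <= #|B|%:R ^+ #|X| * \prod_y (#|fiber y|%:R : F).
Proof.
have m_gt0 y : 0 < (#|fiber y|%:R : F) by rewrite ltr0n fiber_card_gt0.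
have inv_ge0 y : 0 <= (#|fiber y|%:R : F)^-1 by rewrite invr_ge0 ltW.
have sum_le : (\sum_y (#|fiber y|%:R : F)^-1) ^+ #|X| <= #|B|%:R ^+ #|X|.
  by apply: lerXn2r; rewrite ?nnegrE ?ler0n ?sum_inv_fiber_card_le ?sumr_ge0.
have := le_trans (AGM_scaled_le inv_ge0) sum_le.
by rewrite prodfV ler_pdivrMr //; apply: prodr_gt0.
Qed.

Lemma prod_fiber_sum_ge (c : X -> F) : (forall x, 0 <= c x) ->
  \prod_y (#|fiber y|%:R * c y)
    <= \prod_y \sum_(z in fiber y) c z.
Proof.
move=> c_ge0.
rewrite (partition_big h predT) // [leRHS](partition_big h predT) //=.
apply: ler_prod => b _; apply/andP; split.
  by apply: prodr_ge0 => y _; rewrite mulr_ge0.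
have fiberE : (fun y => h y == b) =i h @^-1: [set b] by move=> y; rewrite !inE.
rewrite (eq_bigr (fun y => c y *+ #|h @^-1: [set b]|)) => [|y /eqP <-]; last first.
  by rewrite mulr_natl.
rewrite [leRHS](eq_bigr (fun=> \sum_(z in h @^-1: [set b]) c z)) => [|y /eqP <-] //.
rewrite (eq_bigl _ _ fiberE) [leRHS]prodr_const (eq_card fiberE).
by apply: (leif_AGM_scaled _).1 => y _; rewrite mulrn_wge0.
Qed.

Lemma prod_fiber_sums_ge (c : X -> F) : (forall x, 0 <= c x) ->
  #|X|%:R ^+ #|X| * \prod_y c y
    <= #|B|%:R ^+ #|X| * \prod_y \sum_(z in fiber y) c z.
Proof.
move=> c_ge0; apply: le_trans (ler_wpM2r _ prod_fiber_card_ge) _.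
  exact: prodr_ge0.
rewrite -mulrA -big_split /=; apply: ler_wpM2l; first exact: exprn_ge0.
exact: prod_fiber_sum_ge.
Qed.

End Fibers.

Lemma card_set_sum_fibers (T U : finType) (S : {set T}) (g : T -> U)
    (P : pred U) :
  #|[set x in S | P (g x)]| = (\sum_(u | P u) #|[set x in S | g x == u]|)%N.
Proof.
rewrite -sum1_card (partition_big g P) /= => [|x]; last by rewrite inE => /andP[].
apply: eq_bigr => u Pu; rewrite -sum1_card; apply: eq_bigl => x.
by rewrite !inE; case: eqP => [->|]; rewrite ?Pu ?andbT ?andbF.
Qed.

Section Chains.

Variable X : finType.

Definition cons_ffun n (y : X) (x : {ffun 'I_n -> X}) : {ffun 'I_n.+1 -> X} :=
  [ffun i => if unlift ord0 i is Some j then x j else y].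

Definition behead_ffun n (x : {ffun 'I_n.+1 -> X}) : {ffun 'I_n -> X} :=
  [ffun j => x (lift ord0 j)].

Lemma cons_ffun0 n y (x : {ffun 'I_n -> X}) : cons_ffun y x ord0 = y.
Proof. by rewrite ffunE unlift_none. Qed.

Lemma cons_ffun_lift n y (x : {ffun 'I_n -> X}) j :
  cons_ffun y x (lift ord0 j) = x j.
Proof. by rewrite ffunE liftK. Qed.

Lemma cons_ffun_inj n y : injective (@cons_ffun n y).
Proof.
move=> x1 x2 /ffunP eq12; apply/ffunP => j.
by have := eq12 (lift ord0 j); rewrite !cons_ffun_lift.
Qed.

Lemma cons_behead_ffun n (x : {ffun 'I_n.+1 -> X}) :
  cons_ffun (x ord0) (behead_ffun x) = x.
Proof.
by apply/ffunP => i; rewrite ffunE; case: unliftP => [j ->|->]; rewrite ?ffunE.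
Qed.

Definition chains n (R : 'I_n -> rel X) : {set {ffun 'I_n.+1 -> X}} :=
  [set x : {ffun 'I_n.+1 -> X} |
     [forall i, R i (x (widen_ord (leqnSn n) i)) (x (lift ord0 i))]].

Definition chains_from n (R : 'I_n -> rel X) (y : X) :=
  [set x in chains R | x ord0 == y].

Lemma cons_ffun_chains n (R : 'I_n.+1 -> rel X) y x :
  (cons_ffun y x \in chains R)
    = R ord0 y (x ord0) && (x \in chains (fun j => R (lift ord0 j))).
Proof.
rewrite !inE -!(big_andE predT) big_ord_recl /=.
have -> : widen_ord (leqnSn n.+1) ord0 = ord0 by apply: val_inj.
rewrite cons_ffun0 cons_ffun_lift; congr (_ && _); apply: eq_bigr => i _.
have -> : widen_ord (leqnSn n.+1) (lift ord0 i)
          = lift ord0 (widen_ord (leqnSn n) i) by apply: val_inj.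
by rewrite !cons_ffun_lift.
Qed.

Lemma chains_fromS n (R : 'I_n.+1 -> rel X) y :
  chains_from R y
    = cons_ffun y @: [set x in chains (fun j => R (lift ord0 j))
                          | R ord0 y (x ord0)].
Proof.
apply/setP => x; rewrite inE; apply/andP/imsetP => [[xR /eqP x0] | [x' x'R ->]].
  rewrite -(cons_behead_ffun x) x0 cons_ffun_chains in xR.
  exists (behead_ffun x); last by rewrite -x0 cons_behead_ffun.
  by rewrite inE andbC.
split; last by rewrite cons_ffun0.
by rewrite cons_ffun_chains andbC; move: x'R; rewrite inE.
Qed.

Lemma card_chains_from0 (R : 'I_0 -> rel X) y : #|chains_from R y| = 1%N.
Proof.
rewrite -[RHS](cards1 ([ffun=> y] : {ffun 'I_1 -> X})).
apply: eq_card => x; rewrite !inE.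
apply/andP/eqP => [[_ /eqP x0] | ->]; last first.
  by rewrite ffunE; split; first by apply/forallP => -[].
by apply/ffunP => i; rewrite ffunE (ord1 i).
Qed.

Lemma card_chains_fromS n (R : 'I_n.+1 -> rel X) y :
  #|chains_from R y|
    = (\sum_(z | R ord0 y z) #|chains_from (fun j => R (lift ord0 j)) z|)%N.
Proof.
rewrite chains_fromS card_imset; last exact: cons_ffun_inj.
exact: (card_set_sum_fibers _ (fun x : {ffun 'I_n.+1 -> X} => x ord0) (R ord0 y)).
Qed.

Lemma card_chains n (R : 'I_n -> rel X) :
  #|chains R| = (\sum_y #|chains_from R y|)%N.
Proof.
rewrite -(card_set_sum_fibers _ _ predT); apply: eq_card => x.
by rewrite !inE andbT.
Qed.

Definition fiber_rel n (A : 'I_n -> finType) (f : forall i, X -> A i) i : rel X :=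
  [rel a b | f i a == f i b].

End Chains.

Section ChainCount.

Variables (F : numFieldType) (X : finType).

Lemma prod_card_chains_from_ge n (A : 'I_n -> finType) (f : forall i, X -> A i) :
  (#|X|%:R ^+ n) ^+ #|X|
    <= (\prod_i #|A i|%:R) ^+ #|X|
       * \prod_y (#|chains_from (fiber_rel f) y|%:R : F).
Proof.
elim: n A f => [|n IHn] A f.
  rewrite big_ord0 !expr1n mul1r big1 // => y _.
  by rewrite card_chains_from0.
pose f' j := f (lift ord0 j).
have count_step y : #|chains_from (fiber_rel f) y|
    = (\sum_(z in f ord0 @^-1: [set f ord0 y]) #|chains_from (fiber_rel f') z|)%N.
  by rewrite card_chains_fromS; apply: eq_bigl => z; rewrite !inE eq_sym.
have fiber_step :=
  prod_fiber_sums_ge (f ord0) (fun z => ler0n F #|chains_from (fiber_rel f') z|).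
rewrite big_ord_recl exprS !exprMn.
under [X in _ <= _ * X]eq_bigr do rewrite count_step natr_sum.
apply: le_trans (ler_wpM2l _ (IHn _ f')) _; first exact: exprn_ge0.
rewrite mulrCA [leRHS]mulrAC [leRHS]mulrC; apply: ler_wpM2l fiber_step.
by rewrite exprn_ge0 // prodr_ge0.
Qed.

Lemma card_chains_fiber_rel_ge n (A : 'I_n -> finType) (f : forall i, X -> A i) :
  (0 < #|X|)%N ->
  #|X|%:R ^+ n.+1 <= \prod_i #|A i|%:R * (#|chains (fiber_rel f)|%:R : F).
Proof.
move=> X_gt0.
rewrite -(ler_pXn2r X_gt0) ?nnegrE ?exprn_ge0 ?mulr_ge0 ?prodr_ge0 //.
rewrite exprS [leLHS]exprMn [leRHS]exprMn card_chains natr_sum.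
apply: le_trans (ler_wpM2l _ (prod_card_chains_from_ge f)) _.
  exact: exprn_ge0.
rewrite mulrCA; apply: ler_wpM2l; first by rewrite exprn_ge0 ?prodr_ge0.
exact: AGM_scaled_le.
Qed.

End ChainCount.

Theorem lemma2p1 (n : nat) (X : finType) (A : 'I_n -> finType)
  (f : forall i : 'I_n, X -> A i)
  (hX : (0 < #|X|)%N) (hA : forall i : 'I_n, (0 < #|A i|)%N) :
  ((#|X| ^ n.+1)%:R / (\prod_(i < n) #|A i|)%:R : rat)
    <= (#|chain_tuples f|)%:R.
Proof.
have -> : chain_tuples f = chains (fiber_rel f) by [].
rewrite natrX natr_prod ler_pdivrMr; last first.
  by apply: prodr_gt0 => i _; rewrite ltr0n hA.
by rewrite mulrC; apply: card_chains_fiber_rel_ge.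
Qed.
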